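(* (i) If $G_n\to G$ in $\hat{\mathcal G}_*[\bar{\mathcal Z},\mathcal Z]$, then $[G_n]\to[G]$ in $\mathcal G_*[\bar{\mathcal Z},\mathcal Z]$. (ii) If $[G_n]\to[G]$ in $\mathcal G_*[\bar{\mathcal Z},\mathcal Z]$ and $G\in\hat{\mathcal G}_*[\bar{\mathcal Z},\mathcal Z]$ is a connected representative of $[G]$, then there exist connected representatives $G_n\in\hat{\mathcal G}_*[\bar{\mathcal Z},\mathcal Z]$ of $[G_n]$, $n\in\mathbb N$, such that $G_n\to G$ in $\hat{\mathcal G}_*[\bar{\mathcal Z},\mathcal Z]$. In other words, the set-valued map $[H]\mapsto\{H'\in\hat{\mathcal G}_*[\bar{\mathcal Z},\mathcal Z]:H'\text{ is a connected representative of }[H]\}$ is lower semicontinuous.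
   Context: Let $\bar{\mathcal Z},\mathcal Z$ be Polish spaces. $\hat{\mathcal G}_*[\bar{\mathcal Z},\mathcal Z]$ is the set of all rooted, simple, locally finite (not necessarily connected) graphs $G=(V,E,o,\bar\vartheta,\vartheta)$ with vertex set $V\subseteq\mathbb N$, root $o\in V$, edge marks $\bar\vartheta\in\bar{\mathcal Z}^E$ and vertex marks $\vartheta\in\mathcal Z^V$. For subsets $S_n,S\subseteq\mathbb N$ (or of the set of pairs of naturals), $S_n\to S$ means $S=\bigcup_n\bigcap_{n'>n}S_{n'}=\bigcap_n\bigcup_{n'>n}S_{n'}$. For $v\in V$, $\mathrm{cl}_v(G)$ is $v$ together with its neighbours in $G$. Convergence in $\hat{\mathcal G}_*$: $G_n=(V_n,E_n,o_n,\bar\vartheta^n,\vartheta^n)\to G=(V,E,o,\bar\vartheta,\vartheta)$ iff (1) $V_n\to V$; (2) $E_n\to E$; (3) $o_n\to o$; (4) for every $e\in E$, $\bar\vartheta^n_e\to\bar\vartheta_e$ along those $n$ with $e\in E_n$; (5) for every $v\in V$, $\vartheta^n_v\to\vartheta_v$ along those $n$ with $v\in V_n$; (6) for every $v\in V$, $\max\mathrm{cl}_v(G_n)\to\max\mathrm{cl}_v(G)$ along those $n$ with $v\in V_n$. Isomorphism classes: two rooted marked graphs are isomorphic if there is a bijection of vertex sets preserving adjacency, root and all marks. $[G]$ denotes the isomorphism class of the connected component of the root of $G$ (with its marks); a representative of a class is a connected rooted marked graph in it. $\mathcal G_*[\bar{\mathcal Z},\mathcal Z]$ is the space of such classes with the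 local topology: $[G_n]\to[G]$ iff for every $m\in\mathbb N$ there is $n_m$ and, for $n>n_m$, rooted graph isomorphisms $\varphi_{n,m}$ from the unmarked ball $B_m(G)$ (vertices within graph distance $m$ of the root) onto $B_m(G_n)$ with $\vartheta^n_{\varphi_{n,m}(v)}\to\vartheta_v$ and $\bar\vartheta^n_{\varphi_{n,m}(e)}\to\bar\vartheta_e$ for all vertices $v$ and edges $e$ of $B_m(G)$. *)

From Stdlib Require Import Rdefinitions Raxioms.
From mathcomp Require Import all_boot.
From mathcomp Require Import boolp classical_sets topology.

Set Implicit Arguments.
Unset Strict Implicit.
Unset Printing Implicit Defensive.

Definition polish (T : topologicalType) : Prop :=
  exists d : T -> T -> R,
    (forall x y, Rle R0 (d x y)) /\
    (forall x y, d x y = R0 <-> x = y) /\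
    (forall x y, d x y = d y x) /\
    (forall x y z, Rle (d x z) (Rplus (d x y) (d y z))) /\
    (forall (x : T) (A : set T),
        nbhs x A <-> exists e, Rlt R0 e /\ forall y, Rlt (d x y) e -> A y) /\
    (forall u : nat -> T,
        (forall e, Rlt R0 e -> exists N, forall n m,
            (N <= n)%N -> (N <= m)%N -> Rlt (d (u n) (u m)) e) ->
        exists l, forall e, Rlt R0 e -> exists N, forall n,
            (N <= n)%N -> Rlt (d (u n) l) e) /\
    (exists s : nat -> T, forall x e, Rlt R0 e -> exists k, Rlt (d x (s k)) e).

(* An (undirected) edge {u,v}
   is stored once, as the ordered pair (u,v) with u < v.  Marks are total
   functions; only their values on E resp. V are relevant. *)
Record mgraph (Zb Z : Type) := MGraph {
  gV : nat -> Prop;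
  gE : nat * nat -> Prop;
  groot : nat;
  gemark : nat * nat -> Zb;
  gvmark : nat -> Z }.

Section Graphs.
Variables (Zb Z : Type).
Implicit Types (G H : mgraph Zb Z).

Definition adj G (u v : nat) : Prop := gE G (u, v) \/ gE G (v, u).

Definition emk G (u v : nat) : Zb := gemark G (minn u v, maxn u v).

(* membership in \hat G_*: rooted, simple, locally finite *)
Definition wf_graph G : Prop :=
  gV G (groot G) /\
  (forall u v, gE G (u, v) -> (u < v)%N /\ gV G u /\ gV G v) /\
  (forall v, gV G v -> exists b, forall w, adj G v w -> (w <= b)%N).

Definition cl G (v w : nat) : Prop := w = v \/ adj G v w.
Definition is_max_cl G (v k : nat) : Prop :=
  cl G v k /\ forall w, cl G v w -> (w <= k)%N.

Fixpoint within G (m : nat) (v : nat) : Prop :=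
  match m with
  | 0 => v = groot G
  | m'.+1 => within G m' v \/ exists u, within G m' u /\ adj G u v
  end.

Definition incomp G (v : nat) : Prop := exists m, within G m v.
Definition gconnected G : Prop := forall v, gV G v -> incomp G v.

(* rooted isomorphism of the marked root components: [G] = [H] *)
Definition iso_comp G H : Prop :=
  exists phi : nat -> nat,
    phi (groot G) = groot H /\
    (forall v, incomp G v -> incomp H (phi v)) /\
    (forall u v, incomp G u -> incomp G v -> phi u = phi v -> u = v) /\
    (forall w, incomp H w -> exists v, incomp G v /\ phi v = w) /\
    (forall u v, incomp G u -> incomp G v -> (adj G u v <-> adj H (phi u) (phi v))) /\
    (forall v, incomp G v -> gvmark H (phi v) = gvmark G v) /\
    (forall u v, incomp G u -> incomp G v -> adj G u v ->
        emk H (phi u) (phi v) = emk G u v).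

Definition ball_iso G H (m : nat) (phi : nat -> nat) : Prop :=
  phi (groot G) = groot H /\
  (forall v, within G m v -> within H m (phi v)) /\
  (forall u v, within G m u -> within G m v -> phi u = phi v -> u = v) /\
  (forall w, within H m w -> exists v, within G m v /\ phi v = w) /\
  (forall u v, within G m u -> within G m v -> (adj G u v <-> adj H (phi u) (phi v))).

Definition set_cvg (A : Type) (S : nat -> A -> Prop) (S0 : A -> Prop) : Prop :=
  forall x,
    (S0 x <-> exists n, forall n', (n < n')%N -> S n' x) /\
    (S0 x <-> forall n, exists n', (n < n')%N /\ S n' x).

End Graphs.

Definition cvg_along (T : topologicalType) (P : nat -> Prop) (f : nat -> T) (x : T) : Prop :=
  forall A : set T, nbhs x A -> exists N, forall n, (N <= n)%N -> P n -> A (f n).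

Definition hat_cvg (Zb Z : topologicalType) (Gs : nat -> mgraph Zb Z) (G : mgraph Zb Z) : Prop :=
  set_cvg (fun n => gV (Gs n)) (gV G) /\
  set_cvg (fun n => gE (Gs n)) (gE G) /\
  (exists N, forall n, (N <= n)%N -> groot (Gs n) = groot G) /\
  (forall e, gE G e ->
     cvg_along (fun n => gE (Gs n) e) (fun n => gemark (Gs n) e) (gemark G e)) /\
  (forall v, gV G v ->
     cvg_along (fun n => gV (Gs n) v) (fun n => gvmark (Gs n) v) (gvmark G v)) /\
  (forall v, gV G v -> forall k, is_max_cl G v k ->
     exists N, forall n, (N <= n)%N -> gV (Gs n) v -> is_max_cl (Gs n) v k).

(* local convergence [G_n] -> [G] in G_*[Zb, Z], stated on representatives *)
Definition loc_cvg (Zb Z : topologicalType) (Gs : nat -> mgraph Zb Z) (G : mgraph Zb Z) : Prop :=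
  forall m, exists N, exists phi : nat -> nat -> nat,
    (forall n, (N < n)%N -> ball_iso G (Gs n) m (phi n)) /\
    (forall v, within G m v ->
       cvg_along (fun n => (N < n)%N) (fun n => gvmark (Gs n) (phi n v)) (gvmark G v)) /\
    (forall u v, within G m u -> within G m v -> adj G u v ->
       cvg_along (fun n => (N < n)%N) (fun n => emk (Gs n) (phi n u) (phi n v)) (emk G u v)).

(* (i) For a fixed radius m, the ball B_m(G) together with its neighbours is a
   finite set of labels.  On it the vertex and edge sets of G_n eventually
   agree with those of G, and the eventual stabilisation of the largest label
   of each closed neighbourhood forbids new neighbours with larger labels, so
   the identity is eventually a rooted isomorphism B_m(G) -> B_m(G_n); marks
   then converge label by label.

   (ii) Local convergence yields, for every m and all large n, isomorphisms
   B_m(G) -> B_m(G_n) with marks 1/(m+1)-close for a metric of the Polish mark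
   spaces.  A diagonal choice of radii r_n -> oo gives single isomorphisms
   psi_n on B_{r_n}(G).  Relabelling the root component of G_n so that psi_n
   becomes the identity on the ball, and shifting every other label beyond the
   ball, produces connected representatives whose labelled structure agrees
   with G on ever larger balls. *)

From Stdlib Require Import Reals.
From mathcomp Require Import all_boot.
From mathcomp Require Import boolp classical_sets topology.
From mathcomp Require Import zify.
Set Implicit Arguments.
Unset Strict Implicit.
Unset Printing Implicit Defensive.
Local Open Scope classical_set_scope.

Lemma near_inftyP (P : nat -> Prop) :
  (\forall n \near \oo, P n) <-> exists N, forall n, (N <= n)%N -> P n.
Proof. by split=> [[N _ hN]|[N hN]]; exists N. Qed.

Lemma near_forall_le (B : nat) (Q : nat -> nat -> Prop) :
  (forall u, (u <= B)%N -> \forall n \near \oo, Q u n) ->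
  \forall n \near \oo, forall u, (u <= B)%N -> Q u n.
Proof.
move=> hQ.
have /filterS : \forall n \near \oo, forall i : 'I_B.+1, Q i n.
  by apply: filter_forall => i; exact: hQ i (ltn_ord i).
by apply=> n hn u; rewrite -ltnS => hu; exact: (hn (Ordinal hu)).
Qed.

Lemma cvg_along_near_eq (T : topologicalType) (P : nat -> Prop) (f g : nat -> T) x :
  f @ \oo --> x -> (\forall n \near \oo, g n = f n) -> cvg_along P g x.
Proof.
move=> hf hgf A /hf hA; apply/near_inftyP.
by near=> n => _; rewrite (near hgf n) //; near: n.
Unshelve. all: by end_near.
Qed.

Lemma cvg_along_near (T : topologicalType) (P Q : nat -> Prop) (f g : nat -> T) x :
  cvg_along P f x -> (\forall n \near \oo, Q n -> P n /\ g n = f n) -> cvg_along Q g x.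
Proof.
move=> hf hQP A /hf /near_inftyP hA; apply/near_inftyP.
by apply: filterS2 hA hQP => n hPA hQP /hQP [/hPA + ->].
Qed.

Lemma set_cvgP (A : Type) (S : nat -> A -> Prop) (S0 : A -> Prop) :
  set_cvg S S0 <-> forall x, \forall n \near \oo, (S n x <-> S0 x).
Proof.
split=> [h x|h x].
  have [[liminf _] [_ limsup]] := h x.
  have [S0x|nS0x] := pselect (S0 x).
    have [N hN] := liminf S0x; exists N.+1 => // n hn; split=> // _; exact: hN.
  have [N hN] : exists N, ~ exists n, (N < n)%N /\ S n x.
    by apply/existsNP => hS; apply/nS0x/limsup.
  by exists N.+1 => // n hn; split=> // Snx; case: hN; exists n.
have [N hN] := (near_inftyP _).1 (h x).
split; split.
- by move=> S0x; exists N => n hn; apply/hN => //; exact: ltnW.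
- by move=> [n hn]; apply/(hN (maxn n N).+1); [lia|apply: hn; lia].
- by move=> S0x n; exists (maxn n N).+1; split; [lia|apply/hN => //; lia].
- by move=> /(_ N) [n [hn Snx]]; apply/(hN n) => //; exact: ltnW.
Qed.

Section GraphFacts.
Variables (Zb Z : Type).
Implicit Types (G H : mgraph Zb Z).

Lemma adj_sym G u v : adj G u v -> adj G v u.
Proof. by rewrite /adj; tauto. Qed.

Lemma emkC G u v : emk G u v = emk G v u.
Proof. by rewrite /emk minnC maxnC. Qed.

Lemma emk_lt G u v : (u < v)%N -> emk G u v = gemark G (u, v).
Proof. by move=> uv; rewrite /emk; congr gemark; congr pair; lia. Qed.

Lemma wf_adj G u v : wf_graph G -> adj G u v -> [/\ gV G u, gV G v & u <> v].
Proof.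
move=> [_ [hE _]] [/hE|/hE] [uv [Vu Vv]]; split=> // e; rewrite e in uv; lia.
Qed.

Lemma wf_edge G u v : wf_graph G -> gE G (u, v) <-> (u < v)%N /\ adj G u v.
Proof.
move=> [_ [hE _]]; split=> [Euv|[uv [//|/hE [vu _]]]]; last by lia.
by split; [exact: (hE _ _ Euv).1|left].
Qed.

Lemma within_adj G j u v : within G j u -> adj G u v -> within G j.+1 v.
Proof. by move=> hu huv; right; exists u. Qed.

Lemma within_mono G j j' v : (j <= j')%N -> within G j v -> within G j' v.
Proof.
elim: j' => [|j' IH] hj; first by have -> : j = 0 by lia.
by case: (ltnP j j'.+1) => h hv; [left; apply: IH hv; lia|have -> : j'.+1 = j by lia].
Qed.

Lemma within_V G j v : wf_graph G -> within G j v -> gV G v.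
Proof.
move=> wf; elim: j v => [|j IH] v /=; first by move=> ->; case: wf.
by case=> [/IH //|[u [_ /(wf_adj wf) []]]].
Qed.

Lemma incomp_V G v : wf_graph G -> incomp G v -> gV G v.
Proof. by move=> wf [j]; exact: within_V. Qed.

Lemma within_bounded G j : wf_graph G -> exists b, forall v, within G j v -> (v <= b)%N.
Proof.
move=> wf; elim: j => [|j [b hb]]; first by exists (groot G) => v /= ->.
have: forall u, (u <= b)%N -> \forall c \near \oo, within G j u -> forall w, adj G u w -> (w <= c)%N.
  move=> u _; have [Vu|nVu] := pselect (gV G u); last first.
    by apply: nearW => c /(within_V wf).
  have [c hc] := wf.2.2 u Vu; exists c => // c' /= cc' _ w /hc; lia.
move=> /near_forall_le /near_inftyP [c hc].
exists (maxn b c) => v /= [/hb|[u [hu huv]]]; first lia.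
by have := hc c (leqnn c) u (hb u hu) hu v huv; lia.
Qed.

Lemma near_forall_within G j (Q : nat -> nat -> Prop) : wf_graph G ->
  (forall v, within G j v -> \forall n \near \oo, Q v n) ->
  \forall n \near \oo, forall v, within G j v -> Q v n.
Proof.
move=> wf hQ; have [b hb] := within_bounded j wf.
have: forall v, (v <= b)%N -> \forall n \near \oo, within G j v -> Q v n.
  move=> v _; have [hv|nhv] := pselect (within G j v); last by apply: nearW.
  by apply: filterS (hQ v hv) => n.
by move=> /near_forall_le; apply: filterS => n hn v hv; exact: hn v (hb v hv) hv.
Qed.

Lemma max_cl_exists G v : wf_graph G -> gV G v -> exists k, is_max_cl G v k.
Proof.
move=> wf Vv; have [b hb] := wf.2.2 v Vv.
have exP : exists w, `[< cl G v w >] by exists v; apply/asboolP; left.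
have ubP : forall w, `[< cl G v w >] -> (w <= maxn v b)%N.
  by move=> w /asboolP [->|/hb]; lia.
case: (ex_maxnP exP ubP) => k /asboolP clk kmax.
by exists k; split=> // w clw; apply: kmax; apply/asboolP.
Qed.

Lemma ball_iso_within G H L psi j v :
  ball_iso G H L psi -> (j <= L)%N -> within G j v -> within H j (psi v).
Proof.
move=> [hr [_ [_ [_ ha]]]]; elim: j v => [|j IH] v hj /=; first by move=> ->.
case=> [h|[u [hu huv]]]; first by left; apply: IH => //; lia.
right; exists (psi u); split; first by apply: IH => //; lia.
apply/ha => //; first by apply: (within_mono (j := j)) => //; lia.
by apply: (within_mono (j := j.+1)) => //; exact: within_adj huv.
Qed.

Lemma ball_iso0 G H : wf_graph G -> wf_graph H -> ball_iso G H 0 (fun _ => groot H).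
Proof.
move=> wG wH; split=> //; split=> //; split; first by move=> u v /= -> ->.
split; first by move=> w /= ->; exists (groot G).
by move=> u v /= -> ->; split=> /wf_adj [] // _ _ [].
Qed.

End GraphFacts.

Section Relabel.
Variables (Zb Z : Type) (G Gn : mgraph Zb Z) (k c : nat) (psi : nat -> nat).

(* Relabel the root component of [Gn] so that the image of the ball [B_k(G)]
   under [psi] carries the labels of [G]; every other vertex [w] of the
   component gets the label [w + c], beyond all labels of the ball. *)
Definition relabel_V (y : nat) : Prop :=
  ((y < c)%N /\ within G k y) \/
  ((c <= y)%N /\ incomp Gn (y - c) /\ ~ (exists v, within G k v /\ psi v = y - c)).

Definition relabel_map (y : nat) : nat := if (y < c)%N then psi y else y - c.

Definition relabel : mgraph Zb Z :=
  @MGraph Zb Z relabel_V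
    (fun e => (e.1 < e.2)%N /\ relabel_V e.1 /\ relabel_V e.2 /\
              adj Gn (relabel_map e.1) (relabel_map e.2))
    (groot G) (fun e => emk Gn (relabel_map e.1) (relabel_map e.2))
    (fun y => gvmark Gn (relabel_map y)).

Hypotheses (wfGn : wf_graph Gn) (bi : ball_iso G Gn k psi)
  (hc : forall v, within G k v -> (v < c)%N).

Lemma relabel_ball v : within G k v -> relabel_V v /\ relabel_map v = psi v.
Proof. by move=> hv; have hvc := hc hv; split; [left|rewrite /relabel_map hvc]. Qed.

Lemma relabel_map_incomp y : relabel_V y -> incomp Gn (relabel_map y).
Proof.
have [_ [hw _]] := bi; rewrite /relabel_map.
case=> [[-> hk]|[hy [hi _]]]; first by exists k; apply: hw.
by have -> : (y < c)%N = false by lia.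
Qed.

Lemma relabel_map_inj y z : relabel_V y -> relabel_V z ->
  relabel_map y = relabel_map z -> y = z.
Proof.
have [_ [_ [hinj _]]] := bi; rewrite /relabel_map.
case=> [[hy hky]|[hy [_ hny]]]; case=> [[hz hkz]|[hz [_ hnz]]];
  rewrite ?hy ?hz ?(ltnNge y c) ?(ltnNge z c) ?hy ?hz //=.
- exact: hinj.
- by move=> e; case: hnz; exists y.
- by move=> e; case: hny; exists z.
- lia.
Qed.

Lemma relabel_map_surj w : incomp Gn w -> exists2 y, relabel_V y & relabel_map y = w.
Proof.
move=> hw; have [[v [hv <-]]|hn] := pselect (exists v, within G k v /\ psi v = w).
  by have [? ?] := relabel_ball hv; exists v.
exists (w + c); last by rewrite /relabel_map ltnNge leq_addl /= addnK.
by right; rewrite addnK; split; [exact: leq_addl|].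
Qed.

Lemma relabel_adj_V y z : adj relabel y z -> relabel_V y /\ relabel_V z.
Proof. by case=> [[_ [? [? _]]]|[_ [? [? _]]]]. Qed.

Lemma adj_relabel y z : relabel_V y -> relabel_V z ->
  adj relabel y z <-> adj Gn (relabel_map y) (relabel_map z).
Proof.
move=> hy hz; split; first by case=> [[_ [_ [_ h]]]|[_ [_ [_ /adj_sym h]]]].
move=> h; have [_ _ hne] := wf_adj wfGn h.
have yz : y <> z by move=> e; apply: hne; rewrite e.
case: (ltnP y z) => l; first by left.
by right => /=; split; [lia|split => //; split => //; apply: adj_sym].
Qed.

Lemma adj_relabel_ball u v : within G k u -> within G k v ->
  adj relabel u v <-> adj G u v.
Proof.
move=> hu hv; have [Bu eu] := relabel_ball hu; have [Bv ev] := relabel_ball hv.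
by rewrite adj_relabel // eu ev; have [_ [_ [_ [_ ->]]]] := bi.
Qed.

Lemma relabel_adj_ball j v w : (j < k)%N -> within G j v -> adj relabel v w ->
  within G k w.
Proof.
move=> jk hv hvw; have [_ Bw] := relabel_adj_V hvw.
have hvk : within G k v by apply: within_mono hv; exact: ltnW.
have [Bv ev] := relabel_ball hvk.
move: hvw; rewrite adj_relabel // ev => hvw.
have : within Gn k (relabel_map w).
  apply: (within_mono (j := j.+1)) => //.
  by apply: within_adj hvw; apply: ball_iso_within bi _ hv; exact: ltnW.
have [_ [_ [_ [hs _]]]] := bi; move=> /hs [u [hu eu]].
have [Bu eu'] := relabel_ball hu.
by rewrite -(relabel_map_inj Bu Bw) // eu'.
Qed.

Lemma emk_relabel x y : emk relabel x y = emk Gn (relabel_map x) (relabel_map y).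
Proof. by rewrite {1}/emk; case: leqP => _ //=; rewrite emkC. Qed.

Lemma relabel_root : relabel_V (groot G) /\ relabel_map (groot G) = groot Gn.
Proof.
have [h ->] := relabel_ball (within_mono (leq0n k) (erefl (groot G)) : within G k _).
by case: bi.
Qed.

Lemma within_relabel j y : within relabel j y <-> relabel_V y /\ within Gn j (relabel_map y).
Proof.
have [r1 r2] := relabel_root.
elim: j y => [|j IH] y /=.
  by split=> [->|[hy e]] //; apply: relabel_map_inj => //; rewrite e r2.
split.
  case=> [/IH [h1 h2]|[u [/IH [hu1 hu2] huy]]]; first by split => //; left.
  have [_ hy] := relabel_adj_V huy.
  by split => //; right; exists (relabel_map u); split => //; apply/adj_relabel.
move=> [hy [h|[u' [hu' hadj]]]]; first by left; apply/IH.
have [u hu e] := relabel_map_surj (ex_intro _ j hu').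
right; exists u; split; first by apply/IH; rewrite e.
by apply/adj_relabel => //; rewrite e.
Qed.

Lemma incomp_relabel y : incomp relabel y <-> relabel_V y.
Proof.
split=> [[j /within_relabel []] //|hy].
by have [j hj] := relabel_map_incomp hy; exists j; apply/within_relabel.
Qed.

Lemma wf_relabel : wf_graph relabel.
Proof.
split; first exact: relabel_root.1.
split; first by move=> u v [? [? [? _]]].
move=> v hv; have [b hb] := wfGn.2.2 _ (incomp_V wfGn (relabel_map_incomp hv)).
exists (b + c) => w hw; have [_ hw'] := relabel_adj_V hw.
have /hb : adj Gn (relabel_map v) (relabel_map w) by apply/adj_relabel.
by rewrite /relabel_map; case: ifP => //; lia.
Qed.

Lemma relabel_connected : gconnected relabel.
Proof. by move=> v /incomp_relabel. Qed.

Lemma iso_comp_relabel : iso_comp Gn relabel.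
Proof.
have /choice [phi hphi] : forall w, exists y, incomp Gn w ->
    relabel_V y /\ relabel_map y = w.
  move=> w.
  have [/relabel_map_surj [y hy e]|nw] := pselect (incomp Gn w); last by exists 0.
  by exists y.
have [r1 r2] := relabel_root.
have rin : incomp Gn (groot Gn) by exists 0.
exists phi; split; [|split; [|split; [|split; [|split; [|split]]]]].
- by have [h1 h2] := hphi _ rin; apply: relabel_map_inj; rewrite ?h2 ?r2.
- by move=> v hv; apply/incomp_relabel; exact: (hphi v hv).1.
- by move=> u v /hphi [_ eu] /hphi [_ ev] e; rewrite -eu -ev e.
- move=> w /incomp_relabel hw; have hi := relabel_map_incomp hw.
  by exists (relabel_map w); split=> //; apply: relabel_map_inj; case: (hphi _ hi).
- move=> u v /hphi [hu eu] /hphi [hv ev].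
  by rewrite adj_relabel // eu ev.
- by move=> v /hphi [_ /= ->].
- by move=> u v /hphi [_ eu] /hphi [_ ev] _; rewrite emk_relabel eu ev.
Qed.

End Relabel.

Section LabelAgreement.
Variables (Zb Z : Type) (G H : mgraph Zb Z) (m K : nat).
Hypotheses (hroot : groot H = groot G)
  (hK : forall v, within G m.+1 v -> (v <= K)%N)
  (hadj : forall a b, (a <= K)%N -> (b <= K)%N -> adj H a b <-> adj G a b)
  (hnb : forall u w, within G m u -> adj H u w -> (w <= K)%N).

Let inK {j v} : (j <= m.+1)%N -> within G j v -> (v <= K)%N.
Proof. by move=> jm hv; apply/hK/(within_mono jm). Qed.

Lemma within_agree j v : (j <= m)%N -> within H j v <-> within G j v.
Proof.
elim: j v => [|j IH] v jm /=; first by rewrite hroot.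
have IHj u : within H j u <-> within G j u by apply: IH; exact: ltnW.
split=> [[/IHj|[u [/IHj hu huv]]]|[/IHj|[u [hu huv]]]]; try by left.
- have uK : (u <= K)%N by apply: inK hu; lia.
  have vK : (v <= K)%N by apply: hnb huv; apply: within_mono hu; exact: ltnW.
  by right; exists u; split=> //; apply/hadj.
- have uK : (u <= K)%N by apply: inK hu; lia.
  have vK : (v <= K)%N by apply: inK (within_adj hu huv); lia.
  by right; exists u; split; [apply/IHj|apply/hadj].
Qed.

Lemma ball_iso_id : ball_iso G H m id.
Proof.
have hm v := within_agree v (leqnn m).
split=> //; split; first by move=> v /hm.
split=> //; split; first by move=> w /hm hw; exists w.
by move=> u v hu hv; apply: iff_sym; apply: hadj; [exact: inK (leqnSn m) hu|exact: inK (leqnSn m) hv].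
Qed.

End LabelAgreement.

Lemma hat_cvg_near_ball_iso (Zb Z : topologicalType) (Gs : nat -> mgraph Zb Z)
    (G : mgraph Zb Z) :
  wf_graph G -> hat_cvg Gs G -> forall m, \forall n \near \oo, ball_iso G (Gs n) m id.
Proof.
move=> wf [/set_cvgP hV [/set_cvgP hE [[N0 hroot] [_ [_ hcl]]]]] m.
have [K hK] := within_bounded m.+1 wf.
have agree : \forall n \near \oo, forall a, (a <= K)%N -> forall b, (b <= K)%N ->
    adj (Gs n) a b <-> adj G a b.
  apply: near_forall_le => a _; apply: near_forall_le => b _.
  by apply: filterS2 (hE (a, b)) (hE (b, a)) => n eab eba; rewrite /adj eab eba.
have bounded_nb : \forall n \near \oo, forall u, within G m u ->
    forall w, adj (Gs n) u w -> (w <= K)%N.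
  apply: near_forall_within => // u hu; have Vu := within_V wf hu.
  have [k [clk kmax]] := max_cl_exists wf Vu.
  have kK : (k <= K)%N by apply: hK; case: clk => [->|]; [exact: within_mono hu|exact: within_adj].
  have [N hN] := hcl u Vu k (conj clk kmax).
  apply: filterS2 (hV u) (nbhs_infty_ge N) => n Vn Nn w huw.
  by have [_ /(_ w (or_intror huw))] := hN n Nn (Vn.2 Vu); lia.
near=> n; apply: (ball_iso_id (K := K)) => //.
- by near: n; exists N0.
- by move=> a b aK bK; apply: (near agree n).
- by move=> u w hu; move: u hu w; apply: (near bounded_nb n).
Unshelve. all: by end_near.
Qed.

Lemma hat_cvg_loc_cvg (Zb Z : topologicalType) (Gs : nat -> mgraph Zb Z) (G : mgraph Zb Z) :
  wf_graph G -> hat_cvg Gs G -> loc_cvg Gs G.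
Proof.
move=> wf hcvg m; have /near_inftyP [N hN] := hat_cvg_near_ball_iso wf hcvg m.
case: hcvg => /set_cvgP hV [/set_cvgP hE [_ [hem [hvm _]]]].
exists N, (fun _ => id); split; [|split].
- by move=> n /ltnW /hN.
- move=> v /(within_V wf) Vv; apply: cvg_along_near (hvm v Vv) _.
  by apply: filterS (hV v) => n Vn _; split=> //; apply/Vn.
- have emk_cvg a b : adj G a b -> (a < b)%N ->
      cvg_along (fun n => (N < n)%N) (fun n => emk (Gs n) a b) (emk G a b).
    move=> hab ab; have Eab : gE G (a, b) by apply/wf_edge.
    rewrite emk_lt //; apply: cvg_along_near (hem _ Eab) _.
    by apply: filterS (hE (a, b)) => n En _; split; [apply/En|exact: emk_lt].
  move=> u v _ _ huv; case: (ltngtP u v) => [uv|vu|uv]; first exact: emk_cvg.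
    rewrite emkC; apply: cvg_along_near (emk_cvg v u (adj_sym huv) vu) _.
    by apply: nearW => n Nn; split=> //; exact: emkC.
  by have [_ _] := wf_adj wf huv.
Qed.

Definition metrizes (T : topologicalType) (d : T -> T -> R) : Prop :=
  forall (x : T) (A : set T),
    nbhs x A <-> exists e, Rlt R0 e /\ forall y, Rlt (d x y) e -> A y.

Lemma polish_metrizes (T : topologicalType) : polish T -> exists d : T -> T -> R, metrizes d.
Proof. by move=> [d [_ [_ [_ [_ [hd _]]]]]]; exists d. Qed.

Section Metrizes.
Variables (T : topologicalType) (d : T -> T -> R).
Hypothesis hd : metrizes d.

Lemma nbhs_dist_inv (x : T) (m : nat) : nbhs x (fun y => Rlt (d x y) (Rinv (INR m.+1))).
Proof.
apply/hd; exists (Rinv (INR m.+1)); split=> //.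
by apply: Rinv_0_lt_compat; apply: lt_0_INR; apply/ltP.
Qed.

Lemma nbhs_dist_invW (x : T) (A : set T) : nbhs x A ->
  exists m, forall m' y, (m <= m')%N -> Rlt (d x y) (Rinv (INR m'.+1)) -> A y.
Proof.
move=> /hd [e [e0 he]]; have [m [me /ltP m0]] := archimed_cor1 e e0.
exists m => m' y mm' dxy; apply: he; apply: Rlt_trans dxy _; apply: Rle_lt_trans me.
by apply: Rinv_le_contravar; [apply/lt_0_INR/ltP|apply/le_INR/leP; lia].
Qed.

End Metrizes.

Lemma diagonal_radius (P : nat -> nat -> Prop) :
  (forall m, \forall n \near \oo, P m n) ->
  exists r : nat -> nat,
    (forall n, r n = 0 \/ P (r n) n) /\ forall m, \forall n \near \oo, (m <= r n)%N.
Proof.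
move=> hP; have /choice [M hM] : forall m, exists N, forall n, (N <= n)%N -> P m n.
  by move=> m; apply/near_inftyP.
exists (fun n => \max_(j < n.+1 | (M j <= n)%N) j); split.
  move=> n; apply: (big_ind (fun k => k = 0 \/ P k n)); first by left.
    by move=> x y hx hy; rewrite /maxn; case: ifP.
  by move=> j /hM; right.
move=> m; apply/near_inftyP; exists (maxn m (M m)) => n hn.
have mn : (m < n.+1)%N by lia.
by apply: (leq_bigmax_cond (Ordinal mn)) => /=; lia.
Qed.

Section Diagonal.
Variables (Zb Z : topologicalType) (dB : Zb -> Zb -> R) (dZ : Z -> Z -> R).
Variables (Gs : nat -> mgraph Zb Z) (G : mgraph Zb Z).
Hypotheses (hdB : metrizes dB) (hdZ : metrizes dZ).
Hypotheses (wfs : forall n, wf_graph (Gs n)) (wf : wf_graph G) (lc : loc_cvg Gs G).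

Definition marks_close (H : mgraph Zb Z) (m : nat) (phi : nat -> nat) : Prop :=
  (forall v, within G m v -> Rlt (dZ (gvmark G v) (gvmark H (phi v))) (Rinv (INR m.+1))) /\
  (forall u, within G m u -> forall v, within G m v -> adj G u v ->
     Rlt (dB (emk G u v) (emk H (phi u) (phi v))) (Rinv (INR m.+1))).

Lemma loc_cvg_near_close m :
  \forall n \near \oo, exists phi, ball_iso G (Gs n) m phi /\ marks_close (Gs n) m phi.
Proof.
have [N0 [Phi [hb [hvm hem]]]] := lc m.
have closeV : \forall n \near \oo, forall v, within G m v ->
    Rlt (dZ (gvmark G v) (gvmark (Gs n) (Phi n v))) (Rinv (INR m.+1)).
  apply: near_forall_within => // v hv.
  have /near_inftyP := hvm v hv _ (nbhs_dist_inv hdZ (gvmark G v) m).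
  by apply: filterS2 (nbhs_infty_gt N0) => n + h; apply: h.
have closeE : \forall n \near \oo, forall u, within G m u -> forall v, within G m v ->
    adj G u v -> Rlt (dB (emk G u v) (emk (Gs n) (Phi n u) (Phi n v))) (Rinv (INR m.+1)).
  apply: near_forall_within => // u hu; apply: near_forall_within => // v hv.
  have [huv|nuv] := pselect (adj G u v); last by apply: nearW.
  have /near_inftyP := hem u v hu hv huv _ (nbhs_dist_inv hdB (emk G u v) m).
  by apply: filterS2 (nbhs_infty_gt N0) => n + h _; apply: h.
near=> n; exists (Phi n); split; last split.
- by apply: hb; near: n; exact: nbhs_infty_gt.
- by apply: (near closeV n).
- by apply: (near closeE n).
Unshelve. all: by end_near.
Qed.

Lemma loc_cvg_diagonal : exists (r : nat -> nat) (psi : nat -> nat -> nat),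
  [/\ forall n, ball_iso G (Gs n) (r n) (psi n),
      forall m, \forall n \near \oo, (m <= r n)%N,
      forall v, incomp G v -> gvmark (Gs n) (psi n v) @[n --> \oo] --> gvmark G v &
      forall u v, incomp G u -> incomp G v -> adj G u v ->
        emk (Gs n) (psi n u) (psi n v) @[n --> \oo] --> emk G u v].
Proof.
have [r [hr0 hr]] := diagonal_radius loc_cvg_near_close.
have /choice [psi hpsi] : forall n, exists phi,
    ball_iso G (Gs n) (r n) phi /\ ((0 < r n)%N -> marks_close (Gs n) (r n) phi).
  move=> n; case: (hr0 n) => [->|[phi [hb hc]]]; last by exists phi.
  by exists (fun _ => groot (Gs n)); split; [exact: ball_iso0|].
have close m : \forall n \near \oo, (m <= r n)%N /\ marks_close (Gs n) (r n) (psi n).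
  by apply: filterS (hr (maxn m 1)) => n hn; split; [lia|apply: (hpsi n).2; lia].
exists r, psi; split=> [n|//||].
- exact: (hpsi n).1.
- move=> v [j hj] A /(nbhs_dist_invW hdZ) [m hm].
  apply: filterS (close (maxn j m)) => n [jm [hV _]].
  by apply: (hm (r n)); [lia|apply: hV; apply: within_mono hj; lia].
- move=> u v [ju hu] [jv hv] huv A /(nbhs_dist_invW hdB) [m hm].
  apply: filterS (close (maxn (maxn ju jv) m)) => n [jm [_ hE]].
  apply: (hm (r n)); first lia.
  by apply: hE => //; [apply: within_mono hu|apply: within_mono hv]; lia.
Qed.

End Diagonal.

Section RelabelCvg.
Unset Implicit Arguments.
Variables (Zb Z : topologicalType) (Gs : nat -> mgraph Zb Z) (G : mgraph Zb Z).
Variables (r c : nat -> nat) (psi : nat -> nat -> nat).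
Hypotheses (wfs : forall n, wf_graph (Gs n)) (wf : wf_graph G) (conn : gconnected G).
Hypotheses (bi : forall n, ball_iso G (Gs n) (r n) (psi n))
  (hc : forall n v, within G (r n) v -> (v < c n)%N) (hrc : forall n, (r n <= c n)%N)
  (hr : forall m, \forall n \near \oo, (m <= r n)%N).
Hypotheses
  (hvm : forall v, incomp G v -> gvmark (Gs n) (psi n v) @[n --> \oo] --> gvmark G v)
  (hem : forall u v, incomp G u -> incomp G v -> adj G u v ->
     emk (Gs n) (psi n u) (psi n v) @[n --> \oo] --> emk G u v).

Local Notation H n := (relabel G (Gs n) (r n) (c n) (psi n)).

Let near_ball m : \forall n \near \oo, forall v, within G m v -> within G (r n) v.
Proof. by apply: filterS (hr m) => n mn v /(within_mono mn). Qed.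

Lemma near_relabel_V v : gV G v ->
  \forall n \near \oo, gV (H n) v /\ relabel_map (c n) (psi n) v = psi n v.
Proof.
move=> /conn [m hv]; apply: filterS (near_ball m) => n hball.
have h := relabel_ball (Gs n) (psi n) (hc n) (hball v hv). exact h.
Qed.

Lemma near_not_relabel_V x : ~ gV G x -> \forall n \near \oo, ~ gV (H n) x.
Proof.
move=> nVx; apply: filterS (hr x.+1) => n xr [[_ /(within_V wf) //]|[cx _]].
by have := hrc n; lia.
Qed.

Lemma near_adj_relabel u v : gV G u -> gV G v ->
  \forall n \near \oo, adj (H n) u v <-> adj G u v.
Proof.
move=> /conn [mu hu] /conn [mv hv].
apply: filterS (near_ball (maxn mu mv)) => n hball.
apply: (adj_relabel_ball (wfs n) (bi n) (hc n)); apply: hball.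
  by apply: within_mono hu; exact: leq_maxl.
by apply: within_mono hv; exact: leq_maxr.
Qed.

Lemma near_cl_relabel v : gV G v -> \forall n \near \oo, forall w, cl (H n) v w <-> cl G v w.
Proof.
move=> /conn [m hv]; apply: filterS2 (hr m.+1) (near_ball m.+1) => n mr hball w.
have hvr : within G (r n) v by apply: hball; exact: within_mono (leqnSn m) hv.
rewrite /cl; split=> -[->|hvw]; [by left| |by left|]; right.
  have hw := relabel_adj_ball (wfs n) (bi n) (hc n) mr hv hvw.
  by apply/(adj_relabel_ball (wfs n) (bi n) (hc n) hvr hw).
by apply/(adj_relabel_ball (wfs n) (bi n) (hc n) hvr (hball w (within_adj hv hvw))).
Qed.

Lemma relabel_hat_cvg : hat_cvg (fun n => H n) G.
Proof.
have wfH n : wf_graph (H n) := wf_relabel (wfs n) (bi n) (hc n).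
split; [|split; [|split; [|split; [|split]]]].
- apply/set_cvgP => x; have [Vx|nVx] := pselect (gV G x).
    by apply: filterS (near_relabel_V x Vx) => n [].
  by apply: filterS (near_not_relabel_V x nVx).
- apply/set_cvgP => -[a b].
  have [[Va Vb]|nV] := pselect (gV G a /\ gV G b).
    apply: filterS (near_adj_relabel a b Va Vb) => n hab.
    by rewrite (wf_edge _ _ (wfH n)) (wf_edge _ _ wf) hab.
  have [x nVx Vab] : exists2 x, ~ gV G x & forall n, gE (H n) (a, b) -> gV (H n) x.
    have [Va|nVa] := pselect (gV G a); last by exists a => // n /(wfH n).2.1 [_ []].
    by exists b => [Vb|n /(wfH n).2.1 [_ []]] //; apply: nV.
  apply: filterS (near_not_relabel_V x nVx) => n nVn; split=> [/Vab //|].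
  by move=> /(wf.2.1) [_ [Va Vb]]; case: nV.
- by exists 0.
- move=> [a b] Eab; have [ab [Va Vb]] := wf.2.1 a b Eab.
  have hab : adj G a b by left.
  rewrite -(emk_lt _ ab); apply: cvg_along_near_eq (hem a b (conn a Va) (conn b Vb) hab) _.
  apply: filterS2 (near_relabel_V a Va) (near_relabel_V b Vb) => n [_ ea] [_ eb].
  by rewrite /= ea eb.
- move=> v Vv; apply: cvg_along_near_eq (hvm v (conn v Vv)) _.
  by apply: filterS (near_relabel_V v Vv) => n [_ ev]; rewrite /= ev.
- move=> v Vv k [clk kmax]; have /near_inftyP [N hN] := near_cl_relabel v Vv.
  exists N => n Nn _; split; first by apply/hN.
  by move=> w /(hN n Nn) /kmax.
Qed.

End RelabelCvg.

Lemma loc_cvg_relabel (Zb Z : topologicalType) (hZb : polish Zb) (hZ : polish Z)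
  (Gs : nat -> mgraph Zb Z) (G : mgraph Zb Z) :
  (forall n, wf_graph (Gs n)) -> wf_graph G -> gconnected G -> loc_cvg Gs G ->
  exists Hs : nat -> mgraph Zb Z,
    (forall n, wf_graph (Hs n) /\ gconnected (Hs n) /\ iso_comp (Gs n) (Hs n)) /\
    hat_cvg Hs G.
Proof.
move=> wfs wf conn lc.
have [dB hdB] := polish_metrizes hZb; have [dZ hdZ] := polish_metrizes hZ.
have [r [psi [bi hr hvm hem]]] := loc_cvg_diagonal hdB hdZ wfs wf lc.
have /choice [c hc] : forall k, exists c, (k <= c)%N /\ forall v, within G k v -> (v < c)%N.
  move=> k; have [b hb] := within_bounded k wf.
  by exists (maxn k b).+1; split=> [|v /hb]; lia.
have hrc n : (r n <= c (r n))%N := (hc (r n)).1.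
have hcn n : forall v, within G (r n) v -> (v < c (r n))%N := (hc (r n)).2.
exists (fun n => relabel G (Gs n) (r n) (c (r n)) (psi n)); split.
  move=> n; have := hcn n.
  by split; [exact: wf_relabel|split; [exact: relabel_connected|exact: iso_comp_relabel]].
exact (relabel_hat_cvg _ _ Gs G r (fun n => c (r n)) psi wfs wf conn bi hcn hrc hr hvm hem).
Qed.

Theorem mainTheorem17 (Zb Z : topologicalType) (hZb : polish Zb) (hZ : polish Z) :
  (forall (Gs : nat -> mgraph Zb Z) (G : mgraph Zb Z),
      (forall n, wf_graph (Gs n)) -> wf_graph G ->
      hat_cvg Gs G -> loc_cvg Gs G) /\
  (forall (Gs : nat -> mgraph Zb Z) (G : mgraph Zb Z),
      (forall n, wf_graph (Gs n)) -> wf_graph G -> gconnected G ->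
      loc_cvg Gs G ->
      exists Hs : nat -> mgraph Zb Z,
        (forall n, wf_graph (Hs n) /\ gconnected (Hs n) /\ iso_comp (Gs n) (Hs n)) /\
        hat_cvg Hs G).
Proof.
split; first by move=> Gs G _; exact: hat_cvg_loc_cvg.
by move=> Gs G; exact: loc_cvg_relabel.
Qed.
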